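(* Let $\mathcal{G}$ be a Grothendieck category, $X\in\mathcal{G}$, $\sigma$ an ordinal, $(X_\alpha\mid\alpha\le\sigma)$ a chain of subobjects of $X$ with $X_0=0$, $X_\sigma=X$, $X_\mu=\bigcup_{\alpha<\mu}X_\alpha$ for limit $\mu\le\sigma$, and let $(A_\alpha\mid\alpha<\sigma)$ be subobjects of $X$ with $X_{\alpha+1}=X_\alpha+A_\alpha$ for all $\alpha<\sigma$. If $(S_i\mid i\in I)$ is a family of closed subsets of $\sigma$, then $\ell\big(\bigcap_{i\in I}S_i\big)=\bigcap_{i\in I}\ell(S_i)$.
   Context: For $S\subseteq\sigma$ (with $\sigma$ identified with the set of ordinals $<\sigma$), $\ell(S)=\sum_{\alpha\in S}A_\alpha\in\mathrm{Subobj}(X)$. A subset $S\subseteq\sigma$ is called closed if every $\alpha\in S$ satisfies $X_\alpha\cap A_\alpha\subseteq\sum_{\gamma\in S,\,\gamma<\alpha}A_\gamma$. Sums, intersections and direct unions are taken in the lattice $\mathrm{Subobj}(X)$ of subobjects of $X$. *)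

(* No category-theory library is available, so the category
   G is represented through the only structure the statement uses: the
   lattice Subobj(X) of subobjects of X.  For X in a Grothendieck category
   this is a complete, modular, upper-continuous (AB5) lattice; we state the
   lemma for every such lattice. *)
Set Implicit Arguments.

Definition complete_lattice {L : Type} (le : L -> L -> Prop)
    (sup : (L -> Prop) -> L) : Prop :=
  (forall x, le x x) /\
  (forall x y z, le x y -> le y z -> le x z) /\
  (forall x y, le x y -> le y x -> x = y) /\
  (forall (P : L -> Prop) x, P x -> le x (sup P)) /\
  (forall (P : L -> Prop) u, (forall x, P x -> le x u) -> le (sup P) u).

Definition lbot {L : Type} (sup : (L -> Prop) -> L) : L := sup (fun _ => False).
Definition ltop {L : Type} (sup : (L -> Prop) -> L) : L := sup (fun _ => True).
Definition ljoin {L : Type} (sup : (L -> Prop) -> L) (a b : L) : L :=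
  sup (fun x => x = a \/ x = b).
Definition linf {L : Type} (le : L -> L -> Prop) (sup : (L -> Prop) -> L)
    (P : L -> Prop) : L :=
  sup (fun x => forall y, P y -> le x y).
Definition lmeet {L : Type} (le : L -> L -> Prop) (sup : (L -> Prop) -> L)
    (a b : L) : L :=
  linf le sup (fun x => x = a \/ x = b).

Definition modular_lattice {L : Type} (le : L -> L -> Prop)
    (sup : (L -> Prop) -> L) : Prop :=
  forall a b c, le a c ->
    ljoin sup a (lmeet le sup b c) = lmeet le sup (ljoin sup a b) c.

(* upper continuity (Grothendieck's AB5 condition on subobjects):
   meets distribute over directed joins *)
Definition directed {L : Type} (le : L -> L -> Prop) (D : L -> Prop) : Prop :=
  (exists d, D d) /\
  (forall x y, D x -> D y -> exists z, D z /\ le x z /\ le y z).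

Definition upper_continuous {L : Type} (le : L -> L -> Prop)
    (sup : (L -> Prop) -> L) : Prop :=
  forall (a : L) (D : L -> Prop), directed le D ->
    lmeet le sup a (sup D) = sup (fun x => exists d, D d /\ x = lmeet le sup a d).

Definition subobject_lattice_like {L : Type} (le : L -> L -> Prop)
    (sup : (L -> Prop) -> L) : Prop :=
  complete_lattice le sup /\ modular_lattice le sup /\ upper_continuous le sup.

(* ---------- ordinals: sigma is represented by a well-ordered type T
   (the set of ordinals < sigma); ordinals <= sigma are option T, with
   None standing for sigma itself ---------- *)
Definition well_order {T : Type} (lt : T -> T -> Prop) : Prop :=
  (forall x, ~ lt x x) /\
  (forall x y z, lt x y -> lt y z -> lt x z) /\
  (forall x y, x = y \/ lt x y \/ lt y x) /\
  well_founded lt.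

Definition olt {T : Type} (lt : T -> T -> Prop) (a b : option T) : Prop :=
  match a, b with
  | Some x, Some y => lt x y
  | Some _, None => True
  | None, _ => False
  end.

Definition ole {T : Type} (lt : T -> T -> Prop) (a b : option T) : Prop :=
  a = b \/ olt lt a b.

Definition is_zero {T : Type} (lt : T -> T -> Prop) (b : option T) : Prop :=
  forall g, ~ olt lt g b.

Definition is_limit {T : Type} (lt : T -> T -> Prop) (mu : option T) : Prop :=
  (exists a, olt lt a mu) /\
  (forall a, olt lt a mu -> exists b, olt lt a b /\ olt lt b mu).

Definition is_succ {T : Type} (lt : T -> T -> Prop) (a : T) (b : option T) : Prop :=
  olt lt (Some a) b /\ (forall g, ~ (olt lt (Some a) g /\ olt lt g b)).

Definition filtration_data {L T : Type} (le : L -> L -> Prop)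
    (sup : (L -> Prop) -> L) (lt : T -> T -> Prop)
    (X : option T -> L) (A : T -> L) : Prop :=
  (forall a b, ole lt a b -> le (X a) (X b)) /\
  (forall b, is_zero lt b -> X b = lbot sup) /\
  X None = ltop sup /\
  (forall mu, is_limit lt mu ->
     X mu = sup (fun x => exists a, olt lt a mu /\ x = X a)) /\
  (forall a b, is_succ lt a b -> X b = ljoin sup (X (Some a)) (A a)).

Definition ell {L T : Type} (sup : (L -> Prop) -> L) (A : T -> L)
    (S : T -> Prop) : L :=
  sup (fun x => exists a, S a /\ x = A a).

Definition closed_subset {L T : Type} (le : L -> L -> Prop)
    (sup : (L -> Prop) -> L) (lt : T -> T -> Prop)
    (X : option T -> L) (A : T -> L) (S : T -> Prop) : Prop :=
  forall a, S a ->
    le (lmeet le sup (X (Some a)) (A a))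
       (ell sup A (fun g => S g /\ lt g a)).

From Stdlib Require Import Classical.

(* For a closed S, induction on b gives X_a /\ l(S ∩ [0,b)) <= l(S ∩ [0,a)) for
   all a <= b: at a successor b = c+1 the modular law splits off A_c, whose
   intersection with X_c is controlled by closedness of S at c; at a limit b
   upper continuity reduces to the smaller ordinals.  A second induction shows
   X_b /\ (meet_i l(S_i)) <= l((meet_i S_i) ∩ [0,b)): at b = c+1 either c lies in
   every S_i and modularity splits off A_c, or c is missing from some S_j, and
   then the first claim for S_j gives X_{c+1} /\ l(S_j) <= X_c.  Taking b = sigma
   (where X_sigma is the top) gives the nontrivial inclusion. *)

Lemma well_founded_min {U : Type} {R : U -> U -> Prop} (wf : well_founded R)
    (P : U -> Prop) {x : U} :
  P x -> exists m, P m /\ forall y, R y m -> ~ P y.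
Proof.
  intros Px. apply NNPP. intros Hnone.
  assert (Hempty : forall z, ~ P z).
  { intros z. induction z as [z IH] using (well_founded_ind wf).
    intros Pz. apply Hnone. exists z. split; assumption. }
  exact (Hempty x Px).
Qed.

Section Ordinals.
Context {T : Type} {lt : T -> T -> Prop} (Hwo : well_order lt).

Lemma olt_trans {a b c} : olt lt a b -> olt lt b c -> olt lt a c.
Proof.
  destruct Hwo as (_ & Htrans & _).
  destruct a as [x|], b as [y|], c as [z|]; simpl; eauto; tauto.
Qed.

Lemma olt_total a b : a = b \/ olt lt a b \/ olt lt b a.
Proof.
  destruct Hwo as (_ & _ & Htot & _).
  destruct a as [x|], b as [y|]; simpl; auto.
  destruct (Htot x y) as [->|[H|H]]; auto.
Qed.

Lemma olt_wf : well_founded (olt lt).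
Proof.
  destruct Hwo as (_ & _ & _ & Hwf).
  assert (HSome : forall x, Acc (olt lt) (Some x)).
  { intros x. induction x as [x IH] using (well_founded_ind Hwf).
    constructor. intros [y|] Hy; [exact (IH y Hy) | destruct Hy]. }
  intros [x|]; [apply HSome|].
  constructor. intros [y|] Hy; [apply HSome | destruct Hy].
Qed.

Lemma ole_top b : ole lt b None.
Proof. destruct b; [right; exact Logic.I | left; reflexivity]. Qed.

Lemma ordinal_cases b :
  is_zero lt b \/ (exists c, is_succ lt c b) \/ is_limit lt b.
Proof.
  destruct (classic (exists g, olt lt g b)) as [[g Hg]|Hnone].
  2: { left. intros g Hg. apply Hnone. exists g. exact Hg. }
  right. destruct (classic (exists c, is_succ lt c b)) as [Hsucc|Hnsucc].
  { left. exact Hsucc. }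
  right. split; [exists g; exact Hg|].
  intros [c|] Hcb; [|destruct Hcb].
  apply NNPP. intros Hno. apply Hnsucc. exists c. split; [exact Hcb|].
  intros h [H1 H2]. apply Hno. exists h. split; assumption.
Qed.

Lemma olt_succ_ole {c b a} : is_succ lt c b -> olt lt a b -> ole lt a (Some c).
Proof.
  intros [_ Hgap] Hab. destruct (olt_total a (Some c)) as [->|[H|H]].
  - left. reflexivity.
  - right. exact H.
  - exfalso. exact (Hgap a (conj H Hab)).
Qed.

Lemma lt_succ {c b g} : is_succ lt c b -> olt lt (Some g) b -> g = c \/ lt g c.
Proof.
  intros Hs Hgb. destruct (olt_succ_ole Hs Hgb) as [E|H].
  - left. injection E. auto.
  - right. exact H.
Qed.

Lemma succ_exists {g b} :
  olt lt (Some g) b -> exists c, is_succ lt g c /\ ole lt c b.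
Proof.
  intros Hgb.
  destruct (well_founded_min olt_wf (fun c => olt lt (Some g) c) Hgb)
    as [m [Hgm Hmin]].
  exists m. split.
  - split; [exact Hgm|]. intros h [H1 H2]. exact (Hmin h H2 H1).
  - destruct (olt_total m b) as [->|[H|H]]; [left; reflexivity | right; exact H |].
    exfalso. exact (Hmin b H Hgb).
Qed.

End Ordinals.

Section CompleteLattice.
Context {L : Type} {le : L -> L -> Prop} {sup : (L -> Prop) -> L}.
Hypothesis Hc : complete_lattice le sup.

Local Notation meet := (lmeet le sup).
Local Notation join := (ljoin sup).

Lemma le_refl x : le x x.
Proof. destruct Hc as (Hrefl & _). apply Hrefl. Qed.

Lemma le_trans {x y z} : le x y -> le y z -> le x z.
Proof. destruct Hc as (_ & Htrans & _). apply Htrans. Qed.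

Lemma le_antisym {x y} : le x y -> le y x -> x = y.
Proof. destruct Hc as (_ & _ & Hanti & _). apply Hanti. Qed.

Lemma sup_ub {P : L -> Prop} {x} : P x -> le x (sup P).
Proof. destruct Hc as (_ & _ & _ & Hub & _). apply Hub. Qed.

Lemma sup_lub {P : L -> Prop} {u} : (forall x, P x -> le x u) -> le (sup P) u.
Proof. destruct Hc as (_ & _ & _ & _ & Hlub). apply Hlub. Qed.

Lemma linf_lb {P : L -> Prop} {y} : P y -> le (linf le sup P) y.
Proof. intros Py. apply sup_lub. intros x Hx. exact (Hx y Py). Qed.

Lemma linf_glb {P : L -> Prop} {u} : (forall y, P y -> le u y) -> le u (linf le sup P).
Proof. intros Hu. exact (sup_ub (P := fun x => forall y, P y -> le x y) Hu). Qed.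

Lemma meet_l a b : le (meet a b) a.
Proof. apply linf_lb. left. reflexivity. Qed.

Lemma meet_r a b : le (meet a b) b.
Proof. apply linf_lb. right. reflexivity. Qed.

Lemma meet_glb {a b u} : le u a -> le u b -> le u (meet a b).
Proof. intros Ha Hb. apply linf_glb. intros y [-> | ->]; assumption. Qed.

Lemma join_l a b : le a (join a b).
Proof. apply sup_ub. left. reflexivity. Qed.

Lemma join_r a b : le b (join a b).
Proof. apply sup_ub. right. reflexivity. Qed.

Lemma join_lub {a b u} : le a u -> le b u -> le (join a b) u.
Proof. intros Ha Hb. apply sup_lub. intros x [-> | ->]; assumption. Qed.

Lemma meetC a b : meet a b = meet b a.
Proof. apply le_antisym; apply meet_glb; apply meet_l || apply meet_r. Qed.

Lemma joinC a b : join a b = join b a.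
Proof. apply le_antisym; apply join_lub; apply join_l || apply join_r. Qed.

Lemma meet_mono {a b a' b'} : le a a' -> le b b' -> le (meet a b) (meet a' b').
Proof.
  intros Ha Hb. apply meet_glb.
  - exact (le_trans (meet_l a b) Ha).
  - exact (le_trans (meet_r a b) Hb).
Qed.

Lemma le_ell {I : Type} (A : I -> L) {P : I -> Prop} {a} : P a -> le (A a) (ell sup A P).
Proof. intros Pa. apply sup_ub. exists a. split; [exact Pa | reflexivity]. Qed.

Lemma ell_mono {I : Type} (A : I -> L) (P Q : I -> Prop) :
  (forall a, P a -> Q a) -> le (ell sup A P) (ell sup A Q).
Proof. intros HPQ. apply sup_lub. intros x [a [Pa ->]]. apply le_ell. auto. Qed.

Section Filtration.
Context {T : Type} {lt : T -> T -> Prop} (Hwo : well_order lt).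
Hypothesis Hmod : modular_lattice le sup.
Hypothesis Huc : upper_continuous le sup.

Lemma directed_monotone_image (P : option T -> Prop) (f : option T -> L) :
  (exists c, P c) -> (forall c d, ole lt c d -> le (f c) (f d)) ->
  directed le (fun x => exists c, P c /\ x = f c).
Proof.
  intros [c0 Pc0] Hf. split; [exists (f c0), c0; auto|].
  intros x y [c [Pc ->]] [d [Pd ->]].
  destruct (olt_total Hwo c d) as [<-|[H|H]].
  - exists (f c). split; [exists c; auto | split; apply le_refl].
  - exists (f d). split; [exists d; auto | split; [apply Hf; right; exact H | apply le_refl]].
  - exists (f c). split; [exists c; auto | split; [apply le_refl | apply Hf; right; exact H]].
Qed.

Variables (X : option T -> L) (A : T -> L).
Hypothesis X_mono : forall a b, ole lt a b -> le (X a) (X b).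
Hypothesis X_zero : forall b, is_zero lt b -> X b = lbot sup.
Hypothesis X_top : X None = ltop sup.
Hypothesis X_limit : forall mu, is_limit lt mu ->
  X mu = sup (fun x => exists a, olt lt a mu /\ x = X a).
Hypothesis X_succ : forall a b, is_succ lt a b -> X b = join (X (Some a)) (A a).

Lemma A_le_X {g b} : olt lt (Some g) b -> le (A g) (X b).
Proof.
  intros Hgb. destruct (succ_exists Hwo Hgb) as [c [Hs Hcb]].
  apply (le_trans (y := X c)); [| exact (X_mono _ _ Hcb)].
  rewrite (X_succ _ _ Hs). apply join_r.
Qed.

Definition ell_below (P : T -> Prop) (b : option T) : L :=
  ell sup A (fun g => P g /\ olt lt (Some g) b).

Lemma ell_below_top P : ell_below P None = ell sup A P.
Proof.
  apply le_antisym; apply ell_mono.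
  - intros g [Pg _]. exact Pg.
  - intros g Pg. split; [exact Pg | exact Logic.I].
Qed.

Lemma ell_below_mono P {b b'} : ole lt b b' -> le (ell_below P b) (ell_below P b').
Proof.
  intros Hbb. apply ell_mono. intros g [Pg Hgb]. split; [exact Pg|].
  destruct Hbb as [<-|Hbb]; [exact Hgb | exact (olt_trans Hwo Hgb Hbb)].
Qed.

Lemma ell_below_le_X P b : le (ell_below P b) (X b).
Proof. apply sup_lub. intros x [g [[_ Hgb] ->]]. exact (A_le_X Hgb). Qed.

Lemma A_le_ell_below {P : T -> Prop} {g b} :
  P g -> olt lt (Some g) b -> le (A g) (ell_below P b).
Proof. intros Pg Hgb. apply le_ell. split; assumption. Qed.

Lemma ell_below_succ P {c b} :
  is_succ lt c b -> le (ell_below P b) (join (ell_below P (Some c)) (A c)).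
Proof.
  intros Hs. apply sup_lub. intros x [g [[Pg Hgb] ->]].
  destruct (lt_succ Hwo Hs Hgb) as [->|Hgc].
  - apply join_r.
  - exact (le_trans (A_le_ell_below (b := Some c) Pg Hgc) (join_l _ _)).
Qed.

Lemma ell_below_succ_notin {P c b} :
  is_succ lt c b -> ~ P c -> le (ell_below P b) (ell_below P (Some c)).
Proof.
  intros Hs HPc. apply ell_mono. intros g [Pg Hgb]. split; [exact Pg|].
  destruct (lt_succ Hwo Hs Hgb) as [->|Hgc]; [contradiction | exact Hgc].
Qed.

Lemma ell_below_limit P {a b} : is_limit lt b -> olt lt a b ->
  le (ell_below P b)
     (sup (fun x => exists c, (olt lt c b /\ ole lt a c) /\ x = ell_below P c)).
Proof.
  intros [_ Hlim] Hab. apply sup_lub. intros x [g [[Pg Hgb] ->]].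
  destruct (Hlim (Some g) Hgb) as [c [Hgc Hcb]].
  assert (Hd : exists d, (olt lt d b /\ ole lt a d) /\ olt lt (Some g) d).
  { destruct (olt_total Hwo a c) as [<-|[Hac|Hca]].
    - exists a. split; [split; [exact Hcb | left; reflexivity] | exact Hgc].
    - exists c. split; [split; [exact Hcb | right; exact Hac] | exact Hgc].
    - exists a. split; [split; [exact Hab | left; reflexivity] | exact (olt_trans Hwo Hgc Hca)]. }
  destruct Hd as [d [Hd Hgd]].
  apply (le_trans (A_le_ell_below Pg Hgd)). apply sup_ub. exists d. auto.
Qed.

Lemma closed_meet_X_ell_below_succ {S c b} :
  closed_subset le sup lt X A S -> is_succ lt c b ->
  le (meet (X (Some c)) (ell_below S b)) (ell_below S (Some c)).
Proof.
  intros HS Hs. destruct (classic (S c)) as [Sc|Snc].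
  - apply (le_trans (meet_mono (le_refl _) (ell_below_succ S Hs))).
    rewrite meetC, <- (Hmod _ _ _ (ell_below_le_X S (Some c))).
    apply join_lub; [apply le_refl|].
    rewrite meetC. exact (HS c Sc).
  - exact (le_trans (meet_r _ _) (ell_below_succ_notin Hs Snc)).
Qed.

Lemma closed_meet_X_ell_below {S} : closed_subset le sup lt X A S ->
  forall a b, ole lt a b -> le (meet (X a) (ell_below S b)) (ell_below S a).
Proof.
  intros HS a b. induction b as [b IH] using (well_founded_ind (olt_wf Hwo)).
  intros [<-|Hab]; [apply meet_r|].
  destruct (ordinal_cases (lt := lt) b) as [Hz|[[c Hs]|Hl]].
  - exfalso. exact (Hz a Hab).
  - pose proof (olt_succ_ole Hwo Hs Hab) as Hac.
    refine (le_trans _ (IH (Some c) (proj1 Hs) Hac)).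
    apply meet_glb; [apply meet_l|].
    refine (le_trans _ (closed_meet_X_ell_below_succ HS Hs)).
    exact (meet_mono (X_mono _ _ Hac) (le_refl _)).
  - apply (le_trans (meet_mono (le_refl _) (ell_below_limit S Hl Hab))).
    assert (Hdir : directed le
      (fun x => exists c, (olt lt c b /\ ole lt a c) /\ x = ell_below S c)).
    { apply (directed_monotone_image (fun c => olt lt c b /\ ole lt a c) (ell_below S)).
      - exists a. split; [exact Hab | left; reflexivity].
      - intros c d. apply ell_below_mono. }
    rewrite (Huc _ _ Hdir). apply sup_lub.
    intros x [y [[c [[Hcb Hac] ->]] ->]]. exact (IH c Hcb Hac).
Qed.

Lemma closed_meet_X_ell {S} a : closed_subset le sup lt X A S ->
  le (meet (X a) (ell sup A S)) (ell_below S a).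
Proof.
  intros HS. rewrite <- ell_below_top.
  exact (closed_meet_X_ell_below HS a None (ole_top a)).
Qed.

Lemma meet_X_succ {c b} m : is_succ lt c b -> le (A c) m ->
  meet (X b) m = join (A c) (meet (X (Some c)) m).
Proof.
  intros Hs Hcm. rewrite (X_succ _ _ Hs), joinC. symmetry. exact (Hmod _ _ _ Hcm).
Qed.

Lemma meet_X_succ_ell_notin {S c b} :
  closed_subset le sup lt X A S -> is_succ lt c b -> ~ S c ->
  le (meet (X b) (ell sup A S)) (X (Some c)).
Proof.
  intros HS Hs Snc. apply (le_trans (closed_meet_X_ell b HS)).
  exact (le_trans (ell_below_succ_notin Hs Snc) (ell_below_le_X S (Some c))).
Qed.

Section ClosedFamily.
Variables (I : Type) (S : I -> T -> Prop).
Hypothesis S_closed : forall i, closed_subset le sup lt X A (S i).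

Local Notation ell_inf := (linf le sup (fun x => exists i, x = ell sup A (S i))).

Lemma A_le_ell_inf {c} : (forall i, S i c) -> le (A c) ell_inf.
Proof. intros Sc. apply linf_glb. intros y [i ->]. apply le_ell. apply Sc. Qed.

Lemma meet_X_ell_inf b : le (meet (X b) ell_inf) (ell_below (fun a => forall i, S i a) b).
Proof.
  induction b as [b IH] using (well_founded_ind (olt_wf Hwo)).
  destruct (ordinal_cases (lt := lt) b) as [Hz|[[c Hs]|Hl]].
  - rewrite (X_zero _ Hz). apply (le_trans (meet_l _ _)). apply sup_lub. intros _ [].
  - assert (IHc : le (meet (X (Some c)) ell_inf) (ell_below (fun a => forall i, S i a) b)).
    { refine (le_trans (IH _ (proj1 Hs)) _).
      apply ell_below_mono. right. exact (proj1 Hs). }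
    destruct (classic (forall i, S i c)) as [Sc|Snc].
    + rewrite (meet_X_succ _ Hs (A_le_ell_inf Sc)). apply join_lub; [|exact IHc].
      apply A_le_ell_below; [exact Sc | exact (proj1 Hs)].
    + apply not_all_ex_not in Snc. destruct Snc as [j Snj].
      refine (le_trans _ IHc). apply meet_glb; [|apply meet_r].
      refine (le_trans _ (meet_X_succ_ell_notin (S_closed j) Hs Snj)).
      apply meet_mono; [apply le_refl | apply linf_lb; exists j; reflexivity].
  - rewrite (X_limit _ Hl), meetC.
    assert (Hdir : directed le (fun x => exists a, olt lt a b /\ x = X a)).
    { apply directed_monotone_image; [exact (proj1 Hl) | exact X_mono]. }
    rewrite (Huc _ _ Hdir). apply sup_lub. intros x [y [[a [Hab ->]] ->]].
    rewrite meetC. refine (le_trans (IH a Hab) _).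
    apply ell_below_mono. right. exact Hab.
Qed.

Theorem ell_inter_closed : ell sup A (fun a => forall i, S i a) = ell_inf.
Proof.
  apply le_antisym.
  - apply linf_glb. intros y [i ->]. apply ell_mono. intros a Sa. apply Sa.
  - rewrite <- (ell_below_top (fun a => forall i, S i a)).
    refine (le_trans _ (meet_X_ell_inf None)).
    apply meet_glb; [|apply le_refl].
    rewrite X_top. apply sup_ub. exact Logic.I.
Qed.

End ClosedFamily.
End Filtration.
End CompleteLattice.

Theorem lemma2p4 (L : Type) (le : L -> L -> Prop) (sup : (L -> Prop) -> L)
    (HL : subobject_lattice_like le sup)
    (T : Type) (lt : T -> T -> Prop) (Hwo : well_order lt)
    (X : option T -> L) (A : T -> L) (HXA : filtration_data le sup lt X A)
    (I : Type) (S : I -> T -> Prop)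
    (Hcl : forall i, closed_subset le sup lt X A (S i)) :
  ell sup A (fun a => forall i, S i a)
  = linf le sup (fun x => exists i, x = ell sup A (S i)).
Proof.
  destruct HL as (Hc & Hmod & Huc).
  destruct HXA as (X_mono & X_zero & X_top & X_limit & X_succ).
  exact (ell_inter_closed Hc Hwo Hmod Huc X A X_mono X_zero X_top X_limit X_succ I S Hcl).
Qed.
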